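(* Let $G$ be a finitely generated group and $\tau_{\Delta,e}$ an elementary automorphism of $G$ (arising from a splitting $\Delta$ with element $e$). Let $\mathcal{R}(G)_i$ be an irreducible component of $\mathcal{R}(G)$ containing some $\rho$ with $\operatorname{trace}(\rho(e))\neq-2$. Then $\tau_{\Delta,e}(\mathcal{R}(G)_i)=\mathcal{R}(G)_i$, where automorphisms act on $\mathcal{R}(G)$ by precomposition. Moreover, the modular group $\mathrm{Mod}(G)$ acts trivially on the set of irreducible components of $\mathcal{R}_2(G)$.
   Context: $\mathcal{R}(G)=\mathrm{Hom}(G,SL(2,\mathbb{C}))$, an affine algebraic variety. Elementary automorphisms: (i) if $G=G_1*_EG_2$ with $E$ finitely generated abelian (possibly trivial; $G_1$ possibly trivial) and $e\in Z_{G_2}(E)$, $\tau_{\Delta,e}$ is the identity on $G_1$ and conjugation by $e$ on $G_2$; (ii) if $G=G'*_E$ is an HNN extension over finitely generated abelian $E$ (possibly trivial) with stable letter $t$, $tEt^{-1}=E_1$, and $e\in Z_{G'}(E)$, $\tau_{\Delta,e}$ is the identity on $G'$ and maps $t\mapsto te$. $\mathrm{Mod}(G)$ is the subgroup of $\mathrm{Aut}(G)$ generated by elementary automorphisms. $\mathcal{R}_2(G)$ is the union of those irreducible components $V$ of $\mathcal{R}(G)$ such that for every $g\in G$ there is $\rho\in V$ with $\operatorname{trace}(\rho(g))\neq-2$. *)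

From HB Require Import structures.
From mathcomp Require Import all_boot all_algebra.
From mathcomp Require Import monoid.
From mathcomp.real_closed Require Import complex.
From mathcomp Require Import reals.

Set Implicit Arguments.
Unset Strict Implicit.
Unset Printing Implicit Defensive.

Local Open Scope group_scope.

Section GroupNotions.
Variable G : groupType.

Definition subgroup (A : G -> Prop) : Prop :=
  A 1 /\ (forall x y, A x -> A y -> A (x * y^-1)).

Definition generated_by (A : G -> Prop) (s : seq G) : Prop :=
  (forall x, x \in s -> A x) /\
  (forall B : G -> Prop, subgroup B -> (forall x, x \in s -> B x) ->
     forall x, A x -> B x).

Definition fg_subgroup (A : G -> Prop) : Prop :=
  subgroup A /\ exists s : seq G, generated_by A s.

Definition finitely_generated : Prop :=
  exists s : seq G, generated_by (fun _ => True) s.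

Definition abelian_subgroup (A : G -> Prop) : Prop :=
  forall x y, A x -> A y -> x * y = y * x.

Definition in_centralizer (A E : G -> Prop) (e : G) : Prop :=
  A e /\ forall x, E x -> e * x = x * e.

End GroupNotions.

Definition ghom (G H : groupType) (f : G -> H) : Prop :=
  forall x y, f (x * y) = f x * f y.

Definition ghom_on (G H : groupType) (A : G -> Prop) (f : G -> H) : Prop :=
  forall x y, A x -> A y -> f (x * y) = f x * f y.

(* G = G1 *_E G2 (internal amalgamated free product): G1, G2 subgroups of G,
   E a finitely generated abelian subgroup of both, and G satisfies the
   universal property of the pushout of G1 <- E -> G2 in groups. *)
Definition amalgam_splitting (G : groupType) (G1 G2 E : G -> Prop) : Prop :=
  subgroup G1 /\ subgroup G2 /\ fg_subgroup E /\ abelian_subgroup E /\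
  (forall x, E x -> G1 x) /\ (forall x, E x -> G2 x) /\
  forall (H : groupType) (f1 f2 : G -> H),
    ghom_on G1 f1 -> ghom_on G2 f2 -> (forall x, E x -> f1 x = f2 x) ->
    exists f : G -> H,
      [/\ ghom f, (forall x, G1 x -> f x = f1 x), (forall x, G2 x -> f x = f2 x)
        & forall f' : G -> H, ghom f' -> (forall x, G1 x -> f' x = f1 x) ->
            (forall x, G2 x -> f' x = f2 x) -> forall x, f' x = f x].

(* G = G' *_E (internal HNN extension) with stable letter t, t E t^-1 = E1:
   G', E, E1 subgroups, E, E1 <= G', E finitely generated abelian, and G
   satisfies the universal property of the HNN extension. *)
Definition hnn_splitting (G : groupType) (G' E E1 : G -> Prop) (t : G) : Prop :=
  subgroup G' /\ fg_subgroup E /\ abelian_subgroup E /\ subgroup E1 /\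
  (forall x, E x -> G' x) /\ (forall x, E1 x -> G' x) /\
  (forall x, E x -> E1 (t * x * t^-1)) /\
  (forall y, E1 y -> exists2 x, E x & y = t * x * t^-1) /\
  forall (H : groupType) (f : G -> H) (h : H),
    ghom_on G' f -> (forall x, E x -> h * f x * h^-1 = f (t * x * t^-1)) ->
    exists F : G -> H,
      [/\ ghom F, (forall x, G' x -> F x = f x), F t = h
        & forall F' : G -> H, ghom F' -> (forall x, G' x -> F' x = f x) ->
            F' t = h -> forall x, F' x = F x].

Definition elementary_aut (G : groupType) (e : G) (tau : G -> G) : Prop :=
  (exists G1 G2 E : G -> Prop,
     [/\ amalgam_splitting G1 G2 E, in_centralizer G2 E e, ghom tau,
         (forall x, G1 x -> tau x = x)
       & (forall x, G2 x -> tau x = e * x * e^-1)])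
  \/
  (exists (G' E E1 : G -> Prop) (t : G),
     [/\ hnn_splitting G' E E1 t, in_centralizer G' E e, ghom tau,
         (forall x, G' x -> tau x = x)
       & tau t = t * e]).

(* Mod(G): the subgroup of Aut(G) generated by elementary automorphisms
   (automorphisms compared extensionally). *)
Inductive in_Mod (G : groupType) : (G -> G) -> Prop :=
  | Mod_id : in_Mod id
  | Mod_elem e tau : elementary_aut e tau -> in_Mod tau
  | Mod_comp f g : in_Mod f -> in_Mod g -> in_Mod (f \o g)
  | Mod_inv f g : in_Mod f -> cancel f g -> cancel g f -> in_Mod g
  | Mod_ext f g : in_Mod f -> (forall x, f x = g x) -> in_Mod g.

Local Open Scope ring_scope.

Section RepVariety.
Variables (G : groupType) (C : comNzRingType).

Definition is_SL2_rep (rho : G -> 'M[C]_2) : Prop :=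
  (forall x y : G, rho (x * y)%g = rho x *m rho y) /\
  (forall x : G, \det (rho x) = 1).

Definition Rep := {rho : G -> 'M[C]_2 | is_SL2_rep rho}.

(* regular functions on R(G): the C-algebra generated by the matrix
   coefficients rho |-> rho(g)_{ij} *)
Inductive regfun : Type :=
  | RConst of C
  | RCoord of G & 'I_2 & 'I_2
  | RAdd of regfun & regfun
  | RMul of regfun & regfun.

Fixpoint reg_eval (f : regfun) (rho : Rep) : C :=
  match f with
  | RConst c => c
  | RCoord g i j => proj1_sig rho g i j
  | RAdd f1 f2 => reg_eval f1 rho + reg_eval f2 rho
  | RMul f1 f2 => reg_eval f1 rho * reg_eval f2 rho
  end.

Definition zclosed (Z : Rep -> Prop) : Prop :=
  exists S : regfun -> Prop,
    forall rho, Z rho <-> (forall f, S f -> reg_eval f rho = 0).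

Definition irreducible (V : Rep -> Prop) : Prop :=
  (exists rho, V rho) /\
  forall A B : Rep -> Prop, zclosed A -> zclosed B ->
    (forall rho, V rho -> A rho \/ B rho) ->
    (forall rho, V rho -> A rho) \/ (forall rho, V rho -> B rho).

Definition irr_component (V : Rep -> Prop) : Prop :=
  irreducible V /\
  forall W : Rep -> Prop, irreducible W -> (forall rho, V rho -> W rho) ->
    forall rho, W rho -> V rho.

(* phi(V) = V, where phi acts by precomposition: phi(V) = {rho o phi | rho in V} *)
Definition precomp_stable (phi : G -> G) (V : Rep -> Prop) : Prop :=
  forall sigma : Rep,
    V sigma <-> exists2 rho : Rep, V rho &
                  forall g, proj1_sig sigma g = proj1_sig rho (phi g).

End RepVariety.

(* Let A := rho(e).  The matrices M_u := (1 + u A)^2 / det (1 + u A) lie in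
   SL(2), commute with everything commuting with A, satisfy M_0 = 1 and, by
   Cayley-Hamilton, M_1 = A whenever tr A <> -2.  Twisting rho along the
   splitting by M_u instead of A (conjugating the second factor, resp.
   right-multiplying the stable letter) gives representations rho_u, regular
   in (rho, u) away from det (1 + u A) = 0, with rho_0 = rho and
   rho_1 = rho o tau.  If the component V meets {tr rho(e) <> -2}, then V
   together with all rho_u for rho in V off that closed set is irreducible,
   being swept out by parameter lines through an irreducible set; by
   maximality it is V.  So rho o tau lies in V for a dense set of rho, hence
   for all of V, and as precomposition with tau is invertible, tau(V) = V.
   On R_2(G) the trace condition holds for every e, and Mod(G) is generated
   by elementary automorphisms. *)

From HB Require Import structures.
From mathcomp Require Import all_boot all_algebra.
From mathcomp Require Import monoid.
From mathcomp.real_closed Require Import complex.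
From mathcomp Require Import reals.
From mathcomp Require Import boolp.
From mathcomp Require Import ring.

Set Implicit Arguments.
Unset Strict Implicit.
Unset Printing Implicit Defensive.

Import GRing.Theory.
Local Open Scope ring_scope.

Section Matrix2.
Variable C : comNzRingType.
Implicit Types (M N : 'M[C]_2) (u : C).

Lemma ord2_ind (P : 'I_2 -> Prop) : P 0 -> P 1 -> forall i, P i.
Proof.
move=> P0 P1 [[|[|//]] lti].
- by rewrite (_ : Ordinal lti = 0) //; apply: val_inj.
- by rewrite (_ : Ordinal lti = 1) //; apply: val_inj.
Qed.

Lemma matrix2P M N :
  M 0 0 = N 0 0 -> M 0 1 = N 0 1 -> M 1 0 = N 1 0 -> M 1 1 = N 1 1 -> M = N.
Proof. by move=> *; apply/matrixP; do 2![apply: ord2_ind => //]. Qed.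

Lemma big_ord2 (F : 'I_2 -> C) : \sum_i F i = F 0 + F 1.
Proof. by rewrite !big_ord_recl big_ord0 addr0; congr (F _ + F _); apply: val_inj. Qed.

Lemma mulmx2E M N i j : (M *m N) i j = M i 0 * N 0 j + M i 1 * N 1 j.
Proof. by rewrite mxE big_ord2. Qed.

Lemma mxtrace2 M : \tr M = M 0 0 + M 1 1.
Proof. by rewrite /mxtrace big_ord2. Qed.

Lemma det_mx2 M : \det M = M 0 0 * M 1 1 - M 0 1 * M 1 0.
Proof.
have l01 : lift 0 0 = 1 :> 'I_2 by apply: val_inj.
have l10 : lift 1 0 = 0 :> 'I_2 by apply: val_inj.
rewrite (expand_det_row _ 0) big_ord2 /cofactor !det_mx11 !mxE /= l01 l10.
by rewrite expr0 expr1; ring.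
Qed.

Lemma adj_mx2 M : \adj M = (\tr M)%:M - M.
Proof.
have l01 : lift 0 0 = 1 :> 'I_2 by apply: val_inj.
have l10 : lift 1 0 = 0 :> 'I_2 by apply: val_inj.
apply: matrix2P; rewrite !mxE /cofactor !det_mx11 !mxE mxtrace2 /= ?l01 ?l10;
  by rewrite ?expr0 ?expr1 ?expr2; ring.
Qed.

Lemma Cayley_Hamilton_mx2 M : M *m M = \tr M *: M - (\det M)%:M.
Proof.
have := mul_mx_adj M; rewrite adj_mx2 mulmxBr mul_mx_scalar => /eqP.
by rewrite subr_eq => /eqP ->; rewrite addrC addKr.
Qed.

Lemma det_1Z M u : \det (1%:M + u *: M) = 1 + \tr M * u + \det M * u ^+ 2.
Proof. by rewrite !det_mx2 mxtrace2 !mxE /=; ring. Qed.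

End Matrix2.

Definition SL2 (C : comNzRingType) := {M : 'M[C]_2 | \det M == 1}.
HB.instance Definition _ (C : comNzRingType) := Choice.on (SL2 C).

Section SL2Group.
Variable C : comNzRingType.
Local Notation SL := (SL2 C).
Implicit Types (M : 'M[C]_2) (A B : SL).

Definition SL2_of M (detM : \det M = 1) : SL := exist _ M (introT eqP detM).

Lemma det_SL2 A : \det (val A) = 1.
Proof. exact: eqP (valP A). Qed.

Fact det_adj_SL2 A : \det (\adj (val A)) = 1.
Proof.
have := congr1 determinant (mul_mx_adj (val A)).
by rewrite det_mulmx det_scalar det_SL2 mul1r expr1n.
Qed.

Fact det_mul_SL2 A B : \det (val A *m val B) = 1.
Proof. by rewrite det_mulmx !det_SL2 mulr1. Qed.

Definition SL2_one : SL := SL2_of (det1 C 2).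
Definition SL2_mul A B : SL := SL2_of (det_mul_SL2 A B).
Definition SL2_inv A : SL := SL2_of (det_adj_SL2 A).

Lemma SL2_mulA : associative SL2_mul.
Proof. by move=> A B D; apply: val_inj; rewrite /= mulmxA. Qed.
Lemma SL2_mul1 : left_id SL2_one SL2_mul.
Proof. by move=> A; apply: val_inj; rewrite /= mul1mx. Qed.
Lemma SL2_mulg1 : right_id SL2_one SL2_mul.
Proof. by move=> A; apply: val_inj; rewrite /= mulmx1. Qed.
Lemma SL2_mulV : left_inverse SL2_one SL2_inv SL2_mul.
Proof. by move=> A; apply: val_inj; rewrite /= mul_adj_mx det_SL2. Qed.
Lemma SL2_mulgV : right_inverse SL2_one SL2_inv SL2_mul.
Proof. by move=> A; apply: val_inj; rewrite /= mul_mx_adj det_SL2. Qed.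

HB.instance Definition _ :=
  isGroup.Build SL SL2_mulA SL2_mul1 SL2_mulg1 SL2_mulV SL2_mulgV.

Lemma val_SL2M A B : val (A * B)%g = val A *m val B. Proof. by []. Qed.
Lemma val_SL2V A : val (A^-1)%g = \adj (val A). Proof. by []. Qed.

End SL2Group.

Definition bij (T : Type) :=
  {fg : (T -> T) * (T -> T) | cancel fg.1 fg.2 /\ cancel fg.2 fg.1}.
HB.instance Definition _ (T : Type) := gen_eqMixin (bij T).
HB.instance Definition _ (T : Type) := gen_choiceMixin (bij T).

Section BijGroup.
Variable T : Type.
Implicit Types a b : bij T.

Definition bij_fun a : T -> T := (proj1_sig a).1.

Lemma bij_ext a b : bij_fun a =1 bij_fun b -> a = b.
Proof.
case: a b => [[f f'] /= [fK f'K]] [[g g'] /= [gK g'K]] /funext efg.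
rewrite /bij_fun /= in efg; subst g.
have ef' : f' = g' by apply: funext => x; rewrite -[in LHS](g'K x) fK.
by subst g'; congr exist; apply: Prop_irrelevance.
Qed.

Definition mkbij (f g : T -> T) (fK : cancel f g) (gK : cancel g f) : bij T :=
  exist _ (f, g) (conj fK gK).

Definition bij_one : bij T := @mkbij id id (fun _ => erefl) (fun _ => erefl).

Fact bij_mul_subproof a b :
  cancel (bij_fun a \o bij_fun b) ((proj1_sig b).2 \o (proj1_sig a).2) /\
  cancel ((proj1_sig b).2 \o (proj1_sig a).2) (bij_fun a \o bij_fun b).
Proof.
case: a b => [[f f'] /= [fK f'K]] [[g g'] /= [gK g'K]]; rewrite /bij_fun /=.
by split=> x /=; rewrite ?fK ?gK ?f'K ?g'K.
Qed.

Definition bij_mul a b : bij T := exist _ (_, _) (bij_mul_subproof a b).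
Definition bij_inv a : bij T :=
  @mkbij (proj1_sig a).2 (proj1_sig a).1 (proj2 (proj2_sig a)) (proj1 (proj2_sig a)).

Lemma bij_mulA : associative bij_mul. Proof. by move=> a b c; apply: bij_ext. Qed.
Lemma bij_mul1 : left_id bij_one bij_mul. Proof. by move=> a; apply: bij_ext. Qed.
Lemma bij_mulg1 : right_id bij_one bij_mul. Proof. by move=> a; apply: bij_ext. Qed.
Lemma bij_mulV : left_inverse bij_one bij_inv bij_mul.
Proof. by move=> a; apply: bij_ext => x; apply: (proj1 (proj2_sig a)). Qed.
Lemma bij_mulgV : right_inverse bij_one bij_inv bij_mul.
Proof. by move=> a; apply: bij_ext => x; apply: (proj2 (proj2_sig a)). Qed.

HB.instance Definition _ :=
  isGroup.Build (bij T) bij_mulA bij_mul1 bij_mulg1 bij_mulV bij_mulgV.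

Lemma bij_funM a b x : bij_fun (a * b)%g x = bij_fun a (bij_fun b x).
Proof. by []. Qed.

End BijGroup.

Section Splittings.
Local Open Scope group_scope.
Variable G : groupType.

Section Hom.
Variables (H : groupType) (f : G -> H).
Hypothesis hf : ghom f.

Lemma ghom1 : f 1 = 1.
Proof. by apply: (mulgI (f 1)); rewrite -hf !mulg1. Qed.

Lemma ghomV x : f x^-1 = (f x)^-1.
Proof. by apply/esym/mulg1_eq; rewrite -hf mulgV ghom1. Qed.

End Hom.

Lemma amalgam_hom_eq G1 G2 E (H : groupType) (f f' : G -> H) :
  amalgam_splitting G1 G2 E -> ghom f -> ghom f' ->
  (forall x, G1 x -> f' x = f x) -> (forall x, G2 x -> f' x = f x) -> f' =1 f.
Proof.
move=> [_ [_ [_ [_ [_ [_ U]]]]]] hf hf' e1 e2 x.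
have hfG : forall A : G -> Prop, ghom_on A f by move=> A y z _ _; apply: hf.
have [F [_ _ _ uniqF]] := U H f f (hfG _) (hfG _) (fun _ _ => erefl).
by rewrite (uniqF _ hf' e1 e2) (uniqF _ hf).
Qed.

Lemma hnn_hom_eq G' E E1 t (H : groupType) (f f' : G -> H) :
  hnn_splitting G' E E1 t -> ghom f -> ghom f' ->
  (forall x, G' x -> f' x = f x) -> f' t = f t -> f' =1 f.
Proof.
move=> [_ [_ [_ [_ [_ [_ [_ [_ U]]]]]]]] hf hf' e' et x.
have ft : forall y, E y -> f t * f y * (f t)^-1 = f (t * y * t^-1).
  by move=> y _; rewrite !hf ghomV.
have [F [_ _ _ uniqF]] := U H f (f t) (fun y z _ _ => hf y z) ft.
by rewrite (uniqF _ hf' e' et) (uniqF _ hf).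
Qed.

Section Induction.
Variable B : G -> Prop.
Hypotheses (B1 : B 1) (BM : forall x y, B x -> B y -> B (x * y)).
Hypothesis BV : forall x, B x -> B x^-1.

Definition lmul_fun g (z : G * bool) := (g * z.1, z.2).

Lemma lmul_funK g : cancel (lmul_fun g) (lmul_fun g^-1).
Proof. by case=> z b; rewrite /lmul_fun /= mulKg. Qed.

Lemma lmul_funVK g : cancel (lmul_fun g^-1) (lmul_fun g).
Proof. by case=> z b; rewrite /lmul_fun /= mulVKg. Qed.

Definition lmul g : bij (G * bool) := mkbij (lmul_funK g) (lmul_funVK g).

Definition flip_fun (z : G * bool) := (z.1, if `[< B z.1 >] then z.2 else ~~ z.2).

Lemma flip_funK : involutive flip_fun.
Proof. by case=> z b; rewrite /flip_fun /=; case: `[< B z >]; rewrite ?negbK. Qed.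

Definition flip : bij (G * bool) := mkbij flip_funK flip_funK.

Definition twisted_lmul g := flip * lmul g * flip.

Lemma bij_fun_lmul g z : bij_fun (lmul g) z = (g * z.1, z.2). Proof. by []. Qed.
Lemma bij_fun_flip z : bij_fun flip z = flip_fun z. Proof. by []. Qed.

Lemma lmul_hom : ghom lmul.
Proof. by move=> x y; apply: bij_ext => z; rewrite bij_funM !bij_fun_lmul /= mulgA. Qed.

Lemma twisted_lmul_hom : ghom twisted_lmul.
Proof.
move=> x y; apply: bij_ext => z.
by rewrite !bij_funM !bij_fun_flip !bij_fun_lmul flip_funK /= mulgA.
Qed.

(* lmul and its conjugate by flip are homomorphisms agreeing exactly on B, so
   the uniqueness part of a universal property propagates B from the factors. *)
Lemma twisted_lmulP g : twisted_lmul g = lmul g <-> B g.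
Proof.
split=> [e|Bg].
  have := congr1 (fun a => (bij_fun a (1, false)).2) e.
  rewrite !bij_funM !bij_fun_flip !bij_fun_lmul /flip_fun /=.
  by rewrite mulg1 (asboolT B1); case: asboolP.
apply: bij_ext => -[z b].
rewrite !bij_funM !bij_fun_flip !bij_fun_lmul /flip_fun /=.
have BgzE : B (g * z) <-> B z.
  by split=> [|/(BM Bg)//]; rewrite -{2}(mulKg g z); apply: BM; apply: BV.
by case: (asboolP (B z)) => Bz; case: asboolP => Bgz //=; rewrite ?negbK //;
  [case: Bgz | case: Bz]; apply/BgzE.
Qed.

Lemma amalgam_ind G1 G2 E : amalgam_splitting G1 G2 E ->
  (forall x, G1 x -> B x) -> (forall x, G2 x -> B x) -> forall g, B g.
Proof.
move=> hs B_1 B_2 g; apply/twisted_lmulP.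
apply: (amalgam_hom_eq hs lmul_hom twisted_lmul_hom) => x /[dup].
- by move/B_1/twisted_lmulP.
- by move/B_2/twisted_lmulP.
Qed.

Lemma hnn_ind G' E E1 t : hnn_splitting G' E E1 t ->
  (forall x, G' x -> B x) -> B t -> forall g, B g.
Proof.
move=> hs B' Bt g; apply/twisted_lmulP.
apply: (hnn_hom_eq hs lmul_hom twisted_lmul_hom); last exact/twisted_lmulP.
by move=> x /B'/twisted_lmulP.
Qed.

End Induction.

Lemma amalgam_twist_inverse G1 G2 E e (tau : G -> G) :
  amalgam_splitting G1 G2 E -> in_centralizer G2 E e -> ghom tau ->
  (forall x, G1 x -> tau x = x) -> (forall x, G2 x -> tau x = e * x * e^-1) ->
  exists psi : G -> G, [/\ ghom psi, cancel tau psi & cancel psi tau].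
Proof.
move=> hs [G2e eE] htau tau1 tau2; have [_ [_ [_ [_ [_ [_ U]]]]]] := hs.
have hid : forall A : G -> Prop, ghom_on A id by [].
have hconj : ghom_on G2 (fun x => e^-1 * x * e) by move=> x y _ _; rewrite !mulgA mulgK.
have hE : forall x, E x -> id x = e^-1 * x * e.
  by move=> x Ex; rewrite -mulgA -eE // mulKg.
have [psi [hpsi psi1 psi2 _]] := U G id _ (hid _) hconj hE.
have tau_e : tau e = e by rewrite tau2 // mulgK.
have psi_e : psi e = e by rewrite psi2 // mulVg mul1g.
exists psi; split=> // x.
- apply: (amalgam_hom_eq (f := id) (f' := psi \o tau) hs) => // [a b|a G1a|a G2a] /=.
  + by rewrite htau hpsi.
  + by rewrite tau1 // psi1.
  + by rewrite tau2 // !hpsi (ghomV hpsi) psi_e psi2 // !mulgA mulgV mul1g mulgK.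
- apply: (amalgam_hom_eq (f := id) (f' := tau \o psi) hs) => // [a b|a G1a|a G2a] /=.
  + by rewrite hpsi htau.
  + by rewrite psi1 // tau1.
  + by rewrite psi2 // !htau (ghomV htau) tau_e tau2 // !mulgA mulVg mul1g mulgVK.
Qed.

Lemma hnn_twist_inverse G' E E1 t e (tau : G -> G) :
  hnn_splitting G' E E1 t -> in_centralizer G' E e -> ghom tau ->
  (forall x, G' x -> tau x = x) -> tau t = t * e ->
  exists psi : G -> G, [/\ ghom psi, cancel tau psi & cancel psi tau].
Proof.
move=> hs [G'e eE] htau tau' taut; have [_ [_ [_ [_ [_ [_ [_ [_ U]]]]]]]] := hs.
have hE : forall x, E x -> t * e^-1 * id x * (t * e^-1)^-1 = id (t * x * t^-1).
  by move=> x Ex; rewrite invgM invgK !mulgA -(mulgA _ x) -eE // mulgA mulgVK.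
have [psi [hpsi psi' psit _]] := U G id _ (fun _ _ _ _ => erefl) hE.
have tau_e : tau e = e by apply: tau'.
exists psi; split=> // x.
- apply: (hnn_hom_eq (f := id) (f' := psi \o tau) hs) => // [a b|a G'a|] /=.
  + by rewrite htau hpsi.
  + by rewrite tau' // psi'.
  + by rewrite taut hpsi psit psi' // mulgVK.
- apply: (hnn_hom_eq (f := id) (f' := tau \o psi) hs) => // [a b|a G'a|] /=.
  + by rewrite hpsi htau.
  + by rewrite psi' // tau'.
  + by rewrite psit htau (ghomV htau) taut tau_e mulgK.
Qed.

End Splittings.

Section RepresentationVariety.
Variables (G : groupType) (C : idomainType).
Local Notation Rp := (Rep G C).
Local Notation rf := (regfun G C).
Implicit Types (rho sigma : Rp) (A B V Z : Rp -> Prop).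

Lemma rep_ext rho sigma : (forall g, proj1_sig rho g = proj1_sig sigma g) -> rho = sigma.
Proof.
case: rho sigma => [f hf] [g hg] /= /funext efg.
by subst g; congr exist; apply: Prop_irrelevance.
Qed.

Lemma rep_mul rho x y : proj1_sig rho (x * y)%g = proj1_sig rho x *m proj1_sig rho y.
Proof. exact: (proj1 (proj2_sig rho)). Qed.

Lemma rep_det rho x : \det (proj1_sig rho x) = 1.
Proof. exact: (proj2 (proj2_sig rho)). Qed.

Lemma rep1 rho : proj1_sig rho 1%g = 1%:M.
Proof.
have := congr1 (mulmx (\adj (proj1_sig rho 1%g))) (rep_mul rho 1 1).
by rewrite mulg1 mulmxA mul_adj_mx rep_det mul1mx => <-.
Qed.

Lemma repV rho g : proj1_sig rho g^-1%g = \adj (proj1_sig rho g).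
Proof.
rewrite -[LHS]mulmx1 -(rep_det rho g) -mul_mx_adj mulmxA -rep_mul.
by rewrite mulVg rep1 mul1mx.
Qed.

Lemma rep_commute rho x y : (x * y = y * x)%g ->
  proj1_sig rho x *m proj1_sig rho y = proj1_sig rho y *m proj1_sig rho x.
Proof. by rewrite -!rep_mul => ->. Qed.

Definition SL2_of_rep rho (x : G) : SL2 C := SL2_of (rep_det rho x).

Lemma SL2_of_rep_hom rho : ghom (SL2_of_rep rho).
Proof. by move=> x y; apply: val_inj; rewrite /= rep_mul. Qed.

Definition rep_of_SL2 (F : G -> SL2 C) (hF : ghom F) : Rp :=
  exist _ (fun g => val (F g))
    (conj (fun x y => congr1 val (hF x y)) (fun x => det_SL2 (F x))).

Section Precomposition.
Variables (phi : G -> G) (hphi : ghom phi).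

Definition precomp rho : Rp :=
  exist _ (fun g => proj1_sig rho (phi g))
    (conj (fun x y => etrans (congr1 _ (hphi x y)) (rep_mul rho _ _))
          (fun x => rep_det rho (phi x))).

Fixpoint regfun_precomp (f : rf) : rf :=
  match f with
  | RConst c => RConst G c
  | RCoord g i j => RCoord C (phi g) i j
  | RAdd f1 f2 => RAdd (regfun_precomp f1) (regfun_precomp f2)
  | RMul f1 f2 => RMul (regfun_precomp f1) (regfun_precomp f2)
  end.

Lemma reg_eval_precomp f rho : reg_eval (regfun_precomp f) rho = reg_eval f (precomp rho).
Proof. by elim: f => //= f1 -> f2 ->. Qed.

Lemma zclosed_precomp A : zclosed A -> zclosed (fun rho => A (precomp rho)).
Proof.
move=> [S AS]; exists (fun h => exists2 f, S f & h = regfun_precomp f) => rho.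
split=> [/AS Arho _ [f Sf ->]|Srho]; first by rewrite reg_eval_precomp Arho.
by apply/AS => f Sf; rewrite -reg_eval_precomp; apply: Srho; exists f.
Qed.

End Precomposition.

Lemma zclosedU A B : zclosed A -> zclosed B -> zclosed (fun rho => A rho \/ B rho).
Proof.
move=> [SA AS] [SB BS].
exists (fun h => exists f g, [/\ SA f, SB g & h = RMul f g]) => rho; split.
  move=> [/AS|/BS] zero _ [f [g [Sf Sg ->]]] /=.
  - by rewrite (zero f Sf) mul0r.
  - by rewrite (zero g Sg) mulr0.
move=> zero; case: (pselect (A rho)) => [|nA]; [by left | right].
apply/BS => g Sg; have [f Sf nf] : exists2 f, SA f & reg_eval f rho != 0.
  apply: contrapT => all0; apply: nA; apply/AS => f Sf.
  by apply: contrapT => /eqP nf; apply: all0; exists f.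
have /= /eqP := zero (RMul f g) (ex_intro _ f (ex_intro _ g (And3 Sf Sg erefl))).
by rewrite mulf_eq0 (negbTE nf) => /eqP.
Qed.

Lemma zclosed_trace g c : zclosed (fun rho => \tr (proj1_sig rho g) = c).
Proof.
exists (fun h => h = RAdd (RAdd (RCoord C g 0 0) (RCoord C g 1 1)) (RConst G (- c))).
move=> rho; rewrite mxtrace2; split=> [trc _ -> /=|/(_ _ erefl) /= /eqP].
  by rewrite trc subrr.
by rewrite subr_eq0 => /eqP.
Qed.

Lemma irr_component_zclosed V : irr_component V -> zclosed V.
Proof.
move=> [[V0 Virr] Vmax].
pose S f := forall rho, V rho -> reg_eval f rho = 0.
suff closV : forall rho, (forall f, S f -> reg_eval f rho = 0) -> V rho.
  by exists S => rho; split=> [Vrho f Sf|]; [apply: Sf | apply: closV].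
apply: Vmax => [|rho Vrho f Sf]; last exact: Sf.
split=> [|A B [SA AS] [SB BS] cover]; first by case: V0 => rho Vrho; exists rho => f Sf; apply: Sf.
have VAB : forall rho, V rho -> A rho \/ B rho by move=> rho Vrho; apply: cover => f Sf; apply: Sf.
case: (Virr _ _ (ex_intro _ SA AS) (ex_intro _ SB BS) VAB) => VA; [left|right];
  move=> rho clos.
- by apply/AS => f Sf; apply: clos => sigma /VA /AS; apply.
- by apply/BS => f Sf; apply: clos => sigma /VA /BS; apply.
Qed.

Lemma irreducible_dense V Z A : irreducible V -> zclosed Z -> (exists2 rho, V rho & ~ Z rho) ->
  zclosed A -> (forall rho, V rho -> ~ Z rho -> A rho) -> forall rho, V rho -> A rho.
Proof.
move=> [_ Virr] clZ [rho0 Vrho0 nZrho0] clA VA.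
have cover : forall rho, V rho -> A rho \/ Z rho.
  by move=> rho Vrho; case: (pselect (Z rho)) => [|nZ]; [right | left; apply: VA].
by case: (Virr _ _ clA clZ cover) => // /(_ _ Vrho0).
Qed.

Section Automorphism.
Variables (tau psi : G -> G) (htau : ghom tau) (hpsi : ghom psi).
Hypotheses (tauK : cancel tau psi) (psiK : cancel psi tau).

Lemma precompK : cancel (precomp htau) (precomp hpsi).
Proof. by move=> rho; apply: rep_ext => g /=; rewrite psiK. Qed.

Lemma precompVK : cancel (precomp hpsi) (precomp htau).
Proof. by move=> rho; apply: rep_ext => g /=; rewrite tauK. Qed.

Lemma irreducible_precomp V : irreducible V -> irreducible (fun rho => V (precomp htau rho)).
Proof.
move=> [[rho0 Vrho0] Virr]; split; first by exists (precomp hpsi rho0); rewrite precompVK.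
move=> A B clA clB cover.
have VAB : forall rho, V rho -> A (precomp hpsi rho) \/ B (precomp hpsi rho).
  by move=> rho Vrho; apply: cover; rewrite precompVK.
case: (Virr _ _ (zclosed_precomp hpsi clA) (zclosed_precomp hpsi clB) VAB) => VA;
  [left|right]; move=> rho /VA; by rewrite precompK.
Qed.

Lemma precomp_stable_component V : irr_component V ->
  (forall rho, V rho -> V (precomp htau rho)) -> precomp_stable tau V.
Proof.
move=> [Virr Vmax] Vtau.
have Vtau_inv : forall rho, V (precomp htau rho) -> V rho.
  exact: Vmax (irreducible_precomp Virr) Vtau.
move=> sigma; split=> [Vsigma|[rho Vrho sigmaE]].
  exists (precomp hpsi sigma); first by apply: Vtau_inv; rewrite precompVK.
  by move=> g /=; rewrite tauK.
have -> : sigma = precomp htau rho by apply: rep_ext.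
exact: Vtau.
Qed.

End Automorphism.

End RepresentationVariety.

Section RegularPolynomials.
Variables (G : groupType) (C : comNzRingType).
Local Notation Rp := (Rep G C).
Implicit Types (p q : Rp -> C -> C) (P Q : Rp -> C -> 'M[C]_2).

(* A polynomial in u with regular coefficients, recorded only through its two
   partial evaluations, which is all that the deformation argument uses. *)
Definition regpoly p : Prop :=
  (forall u, exists f : regfun G C, forall rho, reg_eval f rho = p rho u) /\
  (forall rho, exists q : {poly C}, forall u, q.[u] = p rho u).

Definition mx_regpoly P : Prop := forall i j, regpoly (fun rho u => P rho u i j).

Lemma regpoly_ext p q : (forall rho u, p rho u = q rho u) -> regpoly p -> regpoly q.
Proof.
move=> epq [pu prho]; split=> [u|rho].
  by have [f fE] := pu u; exists f => rho; rewrite fE epq.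
by have [r rE] := prho rho; exists r => u; rewrite rE epq.
Qed.

Lemma regpoly_const c : regpoly (fun _ _ => c).
Proof. by split=> [u|rho]; [exists (RConst G c) | exists c%:P => u; rewrite hornerC]. Qed.

Lemma regpoly_var : regpoly (fun _ u => u).
Proof. by split=> [u|rho]; [exists (RConst G u) | exists 'X => u; rewrite hornerX]. Qed.

Lemma regpoly_coord g i j : regpoly (fun rho _ => proj1_sig rho g i j).
Proof.
split=> [u|rho]; first by exists (RCoord C g i j).
by exists (proj1_sig rho g i j)%:P => u; rewrite hornerC.
Qed.

Lemma regpolyD p q : regpoly p -> regpoly q -> regpoly (fun rho u => p rho u + q rho u).
Proof.
move=> [pu prho] [qu qrho]; split=> [u|rho].
  by have [f fE] := pu u; have [g gE] := qu u; exists (RAdd f g) => rho /=; rewrite fE gE.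
have [r rE] := prho rho; have [s sE] := qrho rho.
by exists (r + s) => u; rewrite hornerD rE sE.
Qed.

Lemma regpolyM p q : regpoly p -> regpoly q -> regpoly (fun rho u => p rho u * q rho u).
Proof.
move=> [pu prho] [qu qrho]; split=> [u|rho].
  by have [f fE] := pu u; have [g gE] := qu u; exists (RMul f g) => rho /=; rewrite fE gE.
have [r rE] := prho rho; have [s sE] := qrho rho.
by exists (r * s) => u; rewrite hornerM rE sE.
Qed.

Lemma regpolyN p : regpoly p -> regpoly (fun rho u => - p rho u).
Proof.
move=> rp; apply: regpoly_ext (regpolyM (regpoly_const (-1)) rp) => rho u.
by rewrite mulN1r.
Qed.

Lemma regpolyX p n : regpoly p -> regpoly (fun rho u => p rho u ^+ n).
Proof.
move=> rp; elim: n => [|n IHn]; first exact: regpoly_const.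
by apply: regpoly_ext (regpolyM rp IHn) => rho u; rewrite exprS.
Qed.

Lemma mx_regpoly_rep g : mx_regpoly (fun rho _ => proj1_sig rho g).
Proof. by move=> i j; apply: regpoly_coord. Qed.

Lemma mx_regpoly_scalar p : regpoly p -> mx_regpoly (fun rho u => (p rho u)%:M).
Proof.
move=> rp i j; have : regpoly (fun rho u => p rho u *+ (i == j)).
  by case: (i == j); [apply: regpoly_ext rp => rho u; rewrite mulr1n | apply: regpoly_const].
by apply: regpoly_ext => rho u; rewrite mxE.
Qed.

Lemma mx_regpolyD P Q :
  mx_regpoly P -> mx_regpoly Q -> mx_regpoly (fun rho u => P rho u + Q rho u).
Proof.
move=> rP rQ i j; apply: regpoly_ext (regpolyD (rP i j) (rQ i j)) => rho u.
by rewrite mxE.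
Qed.

Lemma mx_regpolyN P : mx_regpoly P -> mx_regpoly (fun rho u => - P rho u).
Proof. by move=> rP i j; apply: regpoly_ext (regpolyN (rP i j)) => rho u; rewrite mxE. Qed.

Lemma mx_regpolyZ p P :
  regpoly p -> mx_regpoly P -> mx_regpoly (fun rho u => p rho u *: P rho u).
Proof. by move=> rp rP i j; apply: regpoly_ext (regpolyM rp (rP i j)) => rho u; rewrite mxE. Qed.

Lemma mx_regpolyM P Q :
  mx_regpoly P -> mx_regpoly Q -> mx_regpoly (fun rho u => P rho u *m Q rho u).
Proof.
move=> rP rQ i j.
apply: regpoly_ext (regpolyD (regpolyM (rP i 0) (rQ 0 j)) (regpolyM (rP i 1) (rQ 1 j))).
by move=> rho u; rewrite mulmx2E.
Qed.

Lemma regpoly_trace P : mx_regpoly P -> regpoly (fun rho u => \tr (P rho u)).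
Proof.
by move=> rP; apply: regpoly_ext (regpolyD (rP 0 0) (rP 1 1)) => rho u; rewrite mxtrace2.
Qed.

Lemma regpoly_det P : mx_regpoly P -> regpoly (fun rho u => \det (P rho u)).
Proof.
move=> rP; apply: regpoly_ext
  (regpolyD (regpolyM (rP 0 0) (rP 1 1)) (regpolyN (regpolyM (rP 0 1) (rP 1 0)))).
by move=> rho u; rewrite det_mx2.
Qed.

Lemma mx_regpoly_adj P : mx_regpoly P -> mx_regpoly (fun rho u => \adj (P rho u)).
Proof.
move=> rP i j; apply: regpoly_ext
  (mx_regpolyD (mx_regpoly_scalar (regpoly_trace rP)) (mx_regpolyN rP) i j).
by move=> rho u; rewrite adj_mx2.
Qed.

End RegularPolynomials.

Section Deformation.
Variables (G : groupType) (C : closedFieldType).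
Local Notation Rp := (Rep G C).
Implicit Types (rho sigma : Rp) (A B V Z : Rp -> Prop).

Lemma regpoly_common_nonzero p q rho u1 u2 : regpoly p -> regpoly q ->
  p rho u1 != 0 -> q rho u2 != 0 -> exists u, p rho u * q rho u != 0.
Proof.
move=> [_ prho] [_ qrho] pu1 qu2.
have [r rE] := prho rho; have [s sE] := qrho rho.
have nr : r != 0 by apply: contraNneq pu1 => r0; rewrite -rE r0 horner0.
have ns : s != 0 by apply: contraNneq qu2 => s0; rewrite -sE s0 horner0.
have /closed_nonrootP [u] := mulf_neq0 nr ns.
by rewrite /root hornerM rE sE; exists u.
Qed.

Variables (D : Rp -> C -> C) (rel : Rp -> C -> Rp -> Prop).

Definition regular_along (g : G) : Prop :=
  exists N P, mx_regpoly P /\ forall rho u sigma, D rho u != 0 -> rel rho u sigma ->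
    D rho u ^+ N *: proj1_sig sigma g = P rho u.

Lemma regular_alongM g h : regular_along g -> regular_along h -> regular_along (g * h)%g.
Proof.
move=> [M [P [rP PE]]] [N [Q [rQ QE]]].
exists (M + N)%N, (fun rho u => P rho u *m Q rho u); split=> [|rho u sigma nD r].
  exact: mx_regpolyM.
by rewrite -(PE _ _ _ nD r) -(QE _ _ _ nD r) -scalemxAl -scalemxAr scalerA -exprD rep_mul.
Qed.

Lemma regular_alongV g : regular_along g -> regular_along g^-1%g.
Proof.
move=> [N [P [rP PE]]]; exists N, (fun rho u => \adj (P rho u)).
split=> [|rho u sigma nD r]; first exact: mx_regpoly_adj.
by rewrite -(PE _ _ _ nD r) adjZ expr1 repV.
Qed.

Hypothesis D_regpoly : regpoly D.
Hypothesis rel_ex : forall rho u, D rho u != 0 -> exists sigma, rel rho u sigma.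
Hypothesis rel_regular : forall g, regular_along g.

Definition reg_formula (f : regfun G C) N p := regpoly p /\
  forall rho u sigma, D rho u != 0 -> rel rho u sigma -> reg_eval f sigma * D rho u ^+ N = p rho u.

Lemma regfun_formula f : exists N p, reg_formula f N p.
Proof.
elim: f => [c|g i j|f1 [M [p [rp pE]]] f2 [N [q [rq qE]]]|f1 [M [p [rp pE]]] f2 [N [q [rq qE]]]].
- by exists 0%N, (fun _ _ => c); split=> [|*]; rewrite ?expr0 ?mulr1 //; apply: regpoly_const.
- have [N [P [rP PE]]] := rel_regular g.
  exists N, (fun rho u => P rho u i j); split=> // rho u sigma nD r.
  by rewrite -(PE _ _ _ nD r) mxE mulrC.
- exists (M + N)%N, (fun rho u => p rho u * D rho u ^+ N + q rho u * D rho u ^+ M).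
  split=> [|rho u sigma nD r /=]; first by apply: regpolyD; apply: regpolyM => //; apply: regpolyX.
  by rewrite -(pE _ _ _ nD r) -(qE _ _ _ nD r) exprD; ring.
- exists (M + N)%N, (fun rho u => p rho u * q rho u).
  split=> [|rho u sigma nD r /=]; first exact: regpolyM.
  by rewrite -(pE _ _ _ nD r) -(qE _ _ _ nD r) exprD; ring.
Qed.

Definition family_in A rho := forall u sigma, D rho u != 0 -> rel rho u sigma -> A sigma.

Lemma zclosed_family_in A : zclosed A -> zclosed (family_in A).
Proof.
move=> [SA AS].
pose S h := exists f u N p,
  [/\ SA f, reg_formula f N p & forall rho, reg_eval h rho = D rho u * p rho u].
exists S => rho; split=> [famA _ [f [u [N [p [Sf [_ pE] ->]]]]]|zero u sigma nD r].
  have [->|nD] := eqVneq (D rho u) 0; first by rewrite mul0r.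
  have [sigma r] := rel_ex nD.
  by rewrite -(pE _ _ _ nD r) (proj1 (AS sigma) (famA _ _ nD r) f Sf) mul0r mulr0.
apply/AS => f Sf; have [N [p [rp pE]]] := regfun_formula f.
have [h hE] := (regpolyM D_regpoly rp).1 u.
have Sh : S h by exists f, u, N, p.
have /eqP := zero h Sh.
rewrite hE -(pE _ _ _ nD r) !mulf_eq0 expf_eq0 (negbTE nD) andbF orbF /=.
by move/eqP.
Qed.

Lemma not_family_in A SA rho :
  (forall sigma, A sigma <-> (forall f, SA f -> reg_eval f sigma = 0)) -> ~ family_in A rho ->
  exists f N p u, [/\ SA f, reg_formula f N p & D rho u * p rho u != 0].
Proof.
move=> AS nA; apply: contrapT => nex; apply: nA => u sigma nD r; apply/AS => f Sf.
apply/eqP; apply: contraT => nf; case: nex.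
have [N [p [rp pE]]] := regfun_formula f.
exists f, N, p, u; split=> //; rewrite -(pE _ _ _ nD r).
by rewrite !mulf_neq0 // expf_neq0.
Qed.

(* This is where the irreducibility of the parameter line enters. *)
Lemma family_inU A B rho : zclosed A -> zclosed B ->
  family_in (fun sigma => A sigma \/ B sigma) rho -> family_in A rho \/ family_in B rho.
Proof.
move=> [SA AS] [SB BS] famAB.
case: (pselect (family_in A rho)) => [|/(not_family_in AS) famA]; first by left.
case: (pselect (family_in B rho)) => [|/(not_family_in BS) famB]; first by right.
have [f [M [p [u1 [Sf [rp pE] pu1]]]]] := famA.
have [g [N [q [u2 [Sg [rq qE] qu2]]]]] := famB.
have [u] := regpoly_common_nonzero (regpolyM D_regpoly rp) (regpolyM D_regpoly rq) pu1 qu2.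
rewrite !mulf_eq0 !negb_or => /andP [/andP [nD pu] /andP [_ qu]].
have [sigma r] := rel_ex nD.
case: (famAB _ _ nD r) => [/AS fE|/BS gE]; exfalso.
- by move: pu; rewrite -(pE _ _ _ nD r) fE // mul0r eqxx.
- by move: qu; rewrite -(qE _ _ _ nD r) gE // mul0r eqxx.
Qed.

Lemma deformation_in_component V Z : irr_component V -> zclosed Z ->
  (exists2 rho, V rho & ~ Z rho) -> (forall rho, D rho 0 != 0) -> (forall rho, rel rho 0 rho) ->
  forall rho u sigma, V rho -> ~ Z rho -> D rho u != 0 -> rel rho u sigma -> V sigma.
Proof.
move=> [Virr Vmax] clZ VZ D0 rel0 rho u sigma Vrho nZrho nD r.
pose W s := V s \/ exists rho u, [/\ V rho, ~ Z rho, D rho u != 0 & rel rho u s].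
suff Wirr : irreducible W by apply: (Vmax W Wirr) => [s|]; [left | right; exists rho, u].
have WA A : zclosed A -> (forall rho, V rho -> ~ Z rho -> family_in A rho) -> forall s, W s -> A s.
  move=> clA famA s [Vs|[r' [v [Vr nZr nDv rv]]]]; last exact: famA Vr nZr _ _ nDv rv.
  apply: irreducible_dense Virr clZ VZ clA _ _ Vs => r' Vr nZr.
  exact: famA Vr nZr 0 r' (D0 r') (rel0 r').
split=> [|A B clA clB cover]; first by case: VZ => r' Vr _; exists r'; left.
have famAB r' : V r' -> ~ Z r' -> family_in A r' \/ family_in B r'.
  move=> Vr nZr; apply: family_inU clA clB _ => v s nDv rv.
  by apply: cover; right; exists r', v.
have clAB := zclosedU (zclosed_family_in clA) (zclosed_family_in clB).
have := irreducible_dense Virr clZ VZ clAB famAB.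
case/(proj2 Virr _ _ (zclosed_family_in clA) (zclosed_family_in clB)) => famV;
  [left|right]; apply: WA => // r' Vr _; exact: famV.
Qed.

End Deformation.

Section Twist.
Variable C : fieldType.
Implicit Types (A B : 'M[C]_2) (u : C).

Definition twist_factor A u := 1%:M + u *: A.
Definition twist_den A u := \det (twist_factor A u).
Definition twist_num A u := twist_factor A u *m twist_factor A u.
Definition twist A u := (twist_den A u)^-1 *: twist_num A u.

Lemma twist_scale A u : twist_den A u != 0 -> twist_den A u *: twist A u = twist_num A u.
Proof. by move=> nD; rewrite scalerA mulfV // scale1r. Qed.

Lemma det_twist A u : twist_den A u != 0 -> \det (twist A u) = 1.
Proof. by move=> nD; rewrite detZ det_mulmx -expr2 exprVn mulVf // expf_neq0. Qed.

Lemma twist_den0 A : twist_den A 0 = 1.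
Proof. by rewrite /twist_den /twist_factor scale0r addr0 det1. Qed.

Lemma twist0 A : twist A 0 = 1%:M.
Proof.
by rewrite /twist twist_den0 invr1 scale1r /twist_num /twist_factor scale0r addr0 mulmx1.
Qed.

Lemma twist_den1 A : \det A = 1 -> twist_den A 1 = 2 + \tr A.
Proof. by move=> detA; rewrite /twist_den /twist_factor det_1Z detA; ring. Qed.

(* By Cayley-Hamilton, (1 + A)^2 = (2 + tr A) A when det A = 1. *)
Lemma twist1 A : \det A = 1 -> \tr A != -2 -> twist A 1 = A.
Proof.
move=> detA trA; have nD : twist_den A 1 != 0 by rewrite twist_den1 // addrC addr_eq0.
have numE : twist_num A 1 = (2 + \tr A) *: A.
  rewrite /twist_num /twist_factor scale1r mulmxDl !mulmxDr !mul1mx mulmx1 Cayley_Hamilton_mx2 detA.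
  by apply/matrixP => i j; rewrite !mxE; ring.
by rewrite /twist numE twist_den1 // scalerA mulVf ?scale1r // -twist_den1.
Qed.

Lemma twist_commute A B u : A *m B = B *m A -> twist A u *m B = B *m twist A u.
Proof.
move=> AB; have LB : twist_factor A u *m B = B *m twist_factor A u.
  by rewrite /twist_factor mulmxDl mulmxDr mul1mx mulmx1 -scalemxAl -scalemxAr AB.
by rewrite /twist -scalemxAl -scalemxAr /twist_num -mulmxA LB !mulmxA LB -mulmxA.
Qed.

End Twist.

Section TwistedFamily.
Variables (G : groupType) (C : closedFieldType) (e : G).
Local Notation Rp := (Rep G C).
Local Notation D := (fun (rho : Rp) u => twist_den (proj1_sig rho e) u).

Lemma mx_regpoly_twist_factor : mx_regpoly (fun (rho : Rp) u => twist_factor (proj1_sig rho e) u).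
Proof.
apply: mx_regpolyD (mx_regpoly_scalar (regpoly_const G 1))
  (mx_regpolyZ (regpoly_var G C) (mx_regpoly_rep C e)).
Qed.

Lemma regpoly_twist_den : regpoly D.
Proof. exact: regpoly_det mx_regpoly_twist_factor. Qed.

Lemma mx_regpoly_twist_num : mx_regpoly (fun (rho : Rp) u => twist_num (proj1_sig rho e) u).
Proof. exact: mx_regpolyM mx_regpoly_twist_factor mx_regpoly_twist_factor. Qed.

Lemma precomp_stable_of_twist (tau psi : G -> G) (htau : ghom tau) (hpsi : ghom psi)
    (rel : Rp -> C -> Rp -> Prop) (V : Rp -> Prop) :
  cancel tau psi -> cancel psi tau -> irr_component V ->
  (exists2 rho, V rho & \tr (proj1_sig rho e) != -2) ->
  (forall rho, rel rho 0 rho) -> (forall rho u, D rho u != 0 -> exists sigma, rel rho u sigma) ->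
  (forall g, regular_along D rel g) ->
  (forall rho, \tr (proj1_sig rho e) != -2 -> rel rho 1 (precomp htau rho)) ->
  precomp_stable tau V.
Proof.
move=> tauK psiK Vc [rho0 Vrho0 trrho0] rel0 rel_ex rel_reg rel1.
have clZ := zclosed_trace (C := C) e (-2).
have VZ : exists2 rho, V rho & \tr (proj1_sig rho e) <> -2 by exists rho0 => //; apply/eqP.
apply: (precomp_stable_component hpsi tauK psiK Vc).
apply: (irreducible_dense (proj1 Vc) clZ VZ (zclosed_precomp htau (irr_component_zclosed Vc))).
move=> rho Vrho /eqP trrho.
apply: (deformation_in_component regpoly_twist_den rel_ex rel_reg Vc clZ VZ _ rel0 Vrho
  _ _ (rel1 _ trrho)).
- by move=> r; rewrite twist_den0 oner_neq0.
- exact/eqP.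
- by rewrite twist_den1 ?rep_det // addrC addr_eq0.
Qed.

End TwistedFamily.

Section AmalgamTwist.
Variables (G : groupType) (C : closedFieldType) (G1 G2 E : G -> Prop) (e : G).
Hypotheses (hs : amalgam_splitting G1 G2 E) (he : in_centralizer G2 E e).
Local Notation Rp := (Rep G C).
Local Notation D := (fun (rho : Rp) u => twist_den (proj1_sig rho e) u).
Local Notation M rho u := (twist (proj1_sig rho e) u).

Definition amalgam_twist (rho : Rp) u (sigma : Rp) :=
  (forall x, G1 x -> proj1_sig sigma x = proj1_sig rho x) /\
  (forall x, G2 x -> proj1_sig sigma x = M rho u *m proj1_sig rho x *m \adj (M rho u)).

Lemma amalgam_twist0 rho : amalgam_twist rho 0 rho.
Proof. by split=> // x _; rewrite twist0 adj1 mul1mx mulmx1. Qed.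

Lemma amalgam_twist_ex rho u : D rho u != 0 -> exists sigma, amalgam_twist rho u sigma.
Proof.
move=> nD; have [_ [_ [_ [_ [_ [_ U]]]]]] := hs.
pose Ms := SL2_of (det_twist nD).
have hconj : ghom_on G2 (fun x => Ms * SL2_of_rep rho x * Ms^-1)%g.
  by move=> x y _ _; rewrite SL2_of_rep_hom !mulgA mulgVK.
have hE : forall x, E x -> SL2_of_rep rho x = (Ms * SL2_of_rep rho x * Ms^-1)%g.
  move=> x Ex; apply: val_inj; rewrite !val_SL2M val_SL2V /=.
  rewrite (twist_commute _ (rep_commute _ (proj2 he x Ex))) -mulmxA.
  by rewrite mul_mx_adj det_twist // mulmx1.
have [F [hF F1 F2 _]] := U _ _ _ (fun x y _ _ => SL2_of_rep_hom rho x y) hconj hE.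
by exists (rep_of_SL2 hF); split=> x Gx /=; [rewrite F1 | rewrite F2].
Qed.

Lemma amalgam_twist_regular g : regular_along D amalgam_twist g.
Proof.
have reg1 x : G1 x -> regular_along D amalgam_twist x.
  move=> Gx; exists 0%N, (fun rho _ => proj1_sig rho x).
  split=> [|rho u sigma _ [sigmaE _]]; first exact: mx_regpoly_rep.
  by rewrite expr0 scale1r sigmaE.
have G1_1 : G1 1%g by case: hs => -[].
apply: (amalgam_ind (reg1 _ G1_1) (@regular_alongM _ _ _ _) (@regular_alongV _ _ _ _) hs reg1).
move=> x Gx; exists 2%N, (fun rho u =>
  twist_num (proj1_sig rho e) u *m proj1_sig rho x *m \adj (twist_num (proj1_sig rho e) u)).
split=> [|rho u sigma nD [_ sigmaE]].
  apply: mx_regpolyM; last exact: mx_regpoly_adj (mx_regpoly_twist_num _ _).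
  exact: mx_regpolyM (mx_regpoly_twist_num _ _) (mx_regpoly_rep _ _).
rewrite sigmaE // /twist adjZ expr1 -!scalemxAl -scalemxAr.
by rewrite !scalerA expr2 mulfK // mulfV // scale1r.
Qed.

Lemma amalgam_elementary_stable (tau : G -> G) (V : Rp -> Prop) : ghom tau ->
  (forall x, G1 x -> tau x = x) -> (forall x, G2 x -> tau x = e * x * e^-1)%g ->
  irr_component V -> (exists2 rho, V rho & \tr (proj1_sig rho e) != -2) ->
  precomp_stable tau V.
Proof.
move=> htau tau1 tau2 Vc Ve.
have [psi [hpsi tauK psiK]] := amalgam_twist_inverse hs he htau tau1 tau2.
apply: (precomp_stable_of_twist hpsi tauK psiK Vc Ve amalgam_twist0 amalgam_twist_ex
  amalgam_twist_regular) => rho trrho.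
split=> x Gx /=; first by rewrite tau1.
by rewrite tau2 // !rep_mul repV twist1 ?rep_det.
Qed.

End AmalgamTwist.

Section HNNTwist.
Variables (G : groupType) (C : closedFieldType) (G' E E1 : G -> Prop) (t e : G).
Hypotheses (hs : hnn_splitting G' E E1 t) (he : in_centralizer G' E e).
Local Notation Rp := (Rep G C).
Local Notation D := (fun (rho : Rp) u => twist_den (proj1_sig rho e) u).

Definition hnn_twist (rho : Rp) u (sigma : Rp) :=
  (forall x, G' x -> proj1_sig sigma x = proj1_sig rho x) /\
  proj1_sig sigma t = proj1_sig rho t *m twist (proj1_sig rho e) u.

Lemma hnn_twist0 rho : hnn_twist rho 0 rho.
Proof. by split=> //; rewrite twist0 mulmx1. Qed.

Lemma hnn_twist_ex rho u : D rho u != 0 -> exists sigma, hnn_twist rho u sigma.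
Proof.
move=> nD; have [_ [_ [_ [_ [_ [_ [_ [_ U]]]]]]]] := hs.
pose Ms := SL2_of (det_twist nD).
have hrho := SL2_of_rep_hom rho.
have hE : forall x, E x -> (SL2_of_rep rho t * Ms * SL2_of_rep rho x * (SL2_of_rep rho t * Ms)^-1
    = SL2_of_rep rho (t * x * t^-1))%g.
  move=> x Ex; have MX : (Ms * SL2_of_rep rho x = SL2_of_rep rho x * Ms)%g.
    by apply: val_inj; rewrite /= (twist_commute _ (rep_commute _ (proj2 he x Ex))).
  by rewrite !hrho (ghomV hrho) invgM !mulgA -(mulgA _ Ms) MX !mulgA mulgK.
have [F [hF F' Ft _]] := U _ _ _ (fun x y _ _ => hrho x y) hE.
by exists (rep_of_SL2 hF); split=> [x Gx|] /=; [rewrite F' | rewrite Ft].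
Qed.

Lemma hnn_twist_regular g : regular_along D hnn_twist g.
Proof.
have reg' x : G' x -> regular_along D hnn_twist x.
  move=> Gx; exists 0%N, (fun rho _ => proj1_sig rho x).
  split=> [|rho u sigma _ [sigmaE _]]; first exact: mx_regpoly_rep.
  by rewrite expr0 scale1r sigmaE.
have G'1 : G' 1%g by case: hs => -[].
apply: (hnn_ind (reg' _ G'1) (@regular_alongM _ _ _ _) (@regular_alongV _ _ _ _) hs reg').
exists 1%N, (fun rho u => proj1_sig rho t *m twist_num (proj1_sig rho e) u).
split=> [|rho u sigma nD [_ ->]].
  exact: mx_regpolyM (mx_regpoly_rep _ _) (mx_regpoly_twist_num _ _).
by rewrite expr1 scalemxAr twist_scale.
Qed.

Lemma hnn_elementary_stable (tau : G -> G) (V : Rp -> Prop) : ghom tau ->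
  (forall x, G' x -> tau x = x) -> tau t = (t * e)%g ->
  irr_component V -> (exists2 rho, V rho & \tr (proj1_sig rho e) != -2) ->
  precomp_stable tau V.
Proof.
move=> htau tau' taut Vc Ve.
have [psi [hpsi tauK psiK]] := hnn_twist_inverse hs he htau tau' taut.
apply: (precomp_stable_of_twist hpsi tauK psiK Vc Ve hnn_twist0 hnn_twist_ex
  hnn_twist_regular) => rho trrho.
split=> [x Gx|] /=; first by rewrite tau'.
by rewrite taut rep_mul twist1 ?rep_det.
Qed.

End HNNTwist.

Lemma elementary_aut_stable (G : groupType) (C : closedFieldType) e (tau : G -> G)
    (V : Rep G C -> Prop) :
  elementary_aut e tau -> irr_component V ->
  (exists2 rho, V rho & \tr (proj1_sig rho e) != -2) -> precomp_stable tau V.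
Proof.
case=> [[G1 [G2 [E [hs he htau tau1 tau2]]]]|[G' [E [E1 [t [hs he htau tau' taut]]]]]] Vc Ve.
- by apply: (amalgam_elementary_stable hs he htau tau1 tau2 Vc Ve).
- by apply: (hnn_elementary_stable hs he htau tau' taut Vc Ve).
Qed.

Lemma elementary_aut_ghom (G : groupType) e (tau : G -> G) : elementary_aut e tau -> ghom tau.
Proof. by case=> [[? [? [? [_ _ ? _ _]]]]|[? [? [? [? [_ _ ? _ _]]]]]]. Qed.

Lemma in_Mod_ghom (G : groupType) (phi : G -> G) : in_Mod phi -> ghom phi.
Proof.
elim=> {phi} [|e tau /elementary_aut_ghom|f g _ hf _ hg|f g _ hf fK gK|f g _ hf efg] //.
- by move=> x y /=; rewrite hg hf.
- by move=> x y; apply: (can_inj fK); rewrite hf !gK.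
- by move=> x y; rewrite -!efg.
Qed.

Section StableComponents.
Variables (G : groupType) (C : idomainType) (V : Rep G C -> Prop).

Lemma precomp_stable_id : precomp_stable id V.
Proof.
move=> sigma; split=> [Vsigma|[rho Vrho sigmaE]]; first by exists sigma.
by have -> : sigma = rho by apply: rep_ext.
Qed.

Lemma precomp_stable_comp f g (hf : ghom f) (hg : ghom g) :
  precomp_stable f V -> precomp_stable g V -> precomp_stable (f \o g) V.
Proof.
move=> sf sg sigma; split=> [/sg [rho /sf [rho' Vrho' rhoE] sigmaE]|[rho Vrho sigmaE]].
  by exists rho' => // x; rewrite sigmaE rhoE.
apply/sg; exists (precomp hf rho) => //; apply/sf; exists rho => //.
Qed.

Lemma precomp_stable_inv f g (hf : ghom f) : cancel f g -> cancel g f ->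
  precomp_stable f V -> precomp_stable g V.
Proof.
move=> fK gK sf sigma; split=> [Vsigma|[rho /sf [rho' Vrho' rhoE] sigmaE]].
  by exists (precomp hf sigma) => [|x /=]; [apply/sf; exists sigma | rewrite gK].
by have -> : sigma = rho' by apply: rep_ext => x; rewrite sigmaE rhoE gK.
Qed.

End StableComponents.

Theorem theorem4p3 (R : realType) (G : groupType) :
  finitely_generated G ->
  (forall (e : G) (tau : G -> G), elementary_aut e tau ->
     forall V : Rep G R[i] -> Prop, irr_component V ->
       (exists2 rho : Rep G R[i], V rho & (\tr (proj1_sig rho e) != -2)%R) ->
       precomp_stable tau V)
  /\
  (forall phi : G -> G, in_Mod phi ->
     forall V : Rep G R[i] -> Prop, irr_component V ->
       (forall g : G, exists2 rho : Rep G R[i], V rho &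
                        (\tr (proj1_sig rho g) != -2)%R) ->
       precomp_stable phi V).
Proof.
move=> _; split=> [e tau hel V|phi hphi V Vc trV]; first exact: elementary_aut_stable.
elim: hphi => {phi} [|e tau hel|f g hf sf hg sg|f g hf sf fK gK|f g _ sf efg].
- exact: precomp_stable_id.
- exact: elementary_aut_stable hel Vc (trV e).
- exact: precomp_stable_comp (in_Mod_ghom hf) (in_Mod_ghom hg) sf sg.
- exact: precomp_stable_inv (in_Mod_ghom hf) fK gK sf.
- by rewrite -(funext efg).
Qed.
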